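(* Let $n\ge3$ and let $E$ be a closed subset of the unit ball $B_1\subset\mathbb{R}^n$ with $0\in E$ and $B_{1/4}\setminus E\neq\emptyset$. Assume there do NOT exist a point $x_0$, sequences $x_k,y_k,z_k\in B_{1/2}$, and constants $a>1$, $\beta>0$ such that: (1) $x_k,y_k\in E$, $z_k\notin E$, and $x_k,y_k,z_k\to x_0$; (2) with $r_k=|x_k-y_k|$, one has $\frac1ar_k<|x_k-z_k|<ar_k$ and $\frac1ar_k<|y_k-z_k|<ar_k$ for all $k$; (3) $V(x_k,B_{\beta r_k}(z_k))\subset B_1\setminus E$ and $V(y_k,B_{\beta r_k}(z_k))\subset B_1\setminus E$ for all $k$. Then $E\cap B_{1/4}$ is a finite set.
   Context: $B_r(x)$ is the Euclidean ball of radius $r$ centered at $x$, $B_r=B_r(0)$. For $x\in\mathbb{R}^n$ and a ball $B_r(x')$, $V(x,B_r(x'))=\{(1-t)x+ty:t\in(0,1),\ y\in B_r(x')\}$. *)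

From HB Require Import structures.
From mathcomp Require Import all_boot all_order all_algebra.
From mathcomp Require Import all_classical all_reals all_analysis.
Set Implicit Arguments. Unset Strict Implicit. Unset Printing Implicit Defensive.
Import Order.TTheory GRing.Theory Num.Theory.
Import numFieldNormedType.Exports.
Local Open Scope classical_set_scope.
Local Open Scope ring_scope.

(* Points of R^n are row vectors 'rV[R]_n (topology = product topology,
   i.e. the usual Euclidean topology). *)

Definition enorm (R : realType) (n : nat) (x : 'rV[R]_n) : R :=
  Num.sqrt (\sum_(i < n) (x ord0 i) ^+ 2).

Definition euclid_dist (R : realType) (n : nat) (x y : 'rV[R]_n) : R := enorm (x - y).

Definition eball (R : realType) (n : nat) (c : 'rV[R]_n) (r : R) : set 'rV[R]_n :=
  [set y | euclid_dist y c < r].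

Definition Vcone (R : realType) (n : nat) (x c : 'rV[R]_n) (r : R) : set 'rV[R]_n :=
  [set w | exists t : R, exists y : 'rV[R]_n,
     0 < t /\ t < 1 /\ eball c r y /\ w = (1 - t) *: x + t *: y].

From HB Require Import structures.
From mathcomp Require Import all_boot all_order all_algebra.
From mathcomp Require Import all_classical all_reals all_analysis.
From mathcomp Require Import ring lra.
Import Order.TTheory GRing.Theory Num.Theory.
Import numFieldNormedType.Exports.
Local Open Scope classical_set_scope.
Local Open Scope ring_scope.

(* Let x0 be a point of E with |x0| <= 1/4.  Call p outside E stable when
   moving p by less than a quarter of its distance rho to E moves its nearest
   points in E by less than rho / 10^4.

   If arbitrarily close to x0 there are unstable points p, then a nearest
   point x of p, a nearest point y of a slightly moved p' and z = p form the
   excluded configuration at scale |x - y| ~ rho: the cones V(x, B(p)) and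
   V(y, B(p)) lie in the balls B(p, |p - x|) and B(p', |p' - y|), which
   miss E.

   If all points outside E near x0 are stable and x0 is adherent to the
   complement, take p close to x0 with nearest point x.  Stability propagates
   the estimate "every nearest point is close to x" along chains of short
   steps: radially away from x by factors 6/5, and around spheres centred at
   x along chords (through a third point when the two ends are antipodal,
   which needs n >= 2).  For any other e in E near x0 this yields a point c
   of the segment [x, e] with |c - x| = t ~ 10 |e - x| / 19 whose distance
   to E is at least 24 t / 25 > |c - e|, a contradiction; so x0 is isolated.

   If x0 is interior to E, the exit point of E on the segment from x0 to a
   point of B_{1/4} \ E is adherent to the complement but not isolated,
   which the previous cases exclude.  Thus E meets the compact closed ball
   of radius 1/4 in isolated points only, hence in a finite set. *)

Section Euclidean.
Context {R : realType} {n : nat}.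
Local Notation V := 'rV[R]_n.
Implicit Types u v w a b c : V.

Definition dot u v : R := \sum_(i < n) u ord0 i * v ord0 i.

Lemma dotC u v : dot u v = dot v u.
Proof. by apply: eq_bigr => i _; rewrite mulrC. Qed.

Lemma dotDl u v w : dot (u + v) w = dot u w + dot v w.
Proof. by rewrite /dot -big_split; apply: eq_bigr => i _; rewrite mxE mulrDl. Qed.

Lemma dotZl (k : R) u v : dot (k *: u) v = k * dot u v.
Proof. by rewrite /dot mulr_sumr; apply: eq_bigr => i _; rewrite mxE mulrA. Qed.

Lemma dotNl u v : dot (- u) v = - dot u v.
Proof. by rewrite -scaleN1r dotZl mulN1r. Qed.

Lemma dotBl u v w : dot (u - v) w = dot u w - dot v w.
Proof. by rewrite dotDl dotNl. Qed.

Lemma dotDr u v w : dot w (u + v) = dot w u + dot w v.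
Proof. by rewrite dotC dotDl !(dotC w). Qed.

Lemma dotZr (k : R) u v : dot v (k *: u) = k * dot v u.
Proof. by rewrite dotC dotZl dotC. Qed.

Lemma dotNr u v : dot u (- v) = - dot u v.
Proof. by rewrite -scaleN1r dotZr mulN1r. Qed.

Lemma dotBr u v w : dot w (u - v) = dot w u - dot w v.
Proof. by rewrite dotDr dotNr. Qed.

Lemma dot0l u : dot 0 u = 0.
Proof. by rewrite /dot big1 // => i _; rewrite mxE mul0r. Qed.

Lemma dotvv_ge0 u : 0 <= dot u u.
Proof. by apply: sumr_ge0 => i _; rewrite -expr2 sqr_ge0. Qed.

Lemma dotvv_eq0 u : dot u u = 0 -> u = 0.
Proof.
move=> /eqP; rewrite psumr_eq0; last by move=> i _; rewrite -expr2 sqr_ge0.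
move=> /allP u0; apply/rowP => i; rewrite mxE.
have /u0 : i \in index_enum 'I_n by rewrite mem_index_enum.
by rewrite -expr2 sqrf_eq0 => /eqP.
Qed.

Lemma enormE u : enorm u = Num.sqrt (dot u u).
Proof. by congr Num.sqrt; apply: eq_bigr => i _; rewrite expr2. Qed.

Lemma enorm_ge0 u : 0 <= enorm u.
Proof. by rewrite enormE sqrtr_ge0. Qed.

Lemma enorm_sqr u : enorm u ^+ 2 = dot u u.
Proof. by rewrite enormE sqr_sqrtr // dotvv_ge0. Qed.

Lemma enorm0 : enorm (0 : V) = 0.
Proof. by rewrite enormE dot0l sqrtr0. Qed.

Lemma enorm_eq0 u : enorm u = 0 -> u = 0.
Proof. by move=> u0; apply: dotvv_eq0; rewrite -enorm_sqr u0 expr0n. Qed.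

Lemma enorm_gt0 {u : V} : u != 0 -> 0 < enorm u.
Proof.
by move=> u0; rewrite lt0r enorm_ge0 andbT; apply: contra u0 => /eqP/enorm_eq0 ->.
Qed.

Lemma enorm_dist_gt0 {u v : V} : u != v -> 0 < enorm (u - v).
Proof. by move=> uv; apply: enorm_gt0; rewrite subr_eq0. Qed.

Lemma enormZ (k : R) u : enorm (k *: u) = `|k| * enorm u.
Proof.
by rewrite !enormE dotZl dotZr mulrA sqrtrM ?sqr_ge0 // -expr2 sqrtr_sqr.
Qed.

Lemma enormN u : enorm (- u) = enorm u.
Proof. by rewrite -scaleN1r enormZ normrN1 mul1r. Qed.

Lemma enorm_distC u v : enorm (u - v) = enorm (v - u).
Proof. by rewrite -enormN opprB. Qed.

Lemma enorm_le_sqr u (s : R) : 0 <= s -> dot u u <= s ^+ 2 -> enorm u <= s.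
Proof. by move=> s0 us; rewrite -ler_sqr ?nnegrE ?enorm_ge0 // enorm_sqr. Qed.

Lemma enorm_ge_sqr u (s : R) : 0 <= s -> s ^+ 2 <= dot u u -> s <= enorm u.
Proof. by move=> s0 us; rewrite -ler_sqr ?nnegrE ?enorm_ge0 // enorm_sqr. Qed.

Lemma cauchy_schwarz u v : dot u v <= enorm u * enorm v.
Proof.
set a := enorm u; set b := enorm v.
have [a0 b0] : 0 <= a /\ 0 <= b by split; apply: enorm_ge0.
have := dotvv_ge0 (b *: u - a *: v).
rewrite dotBl !dotBr !dotZl !dotZr -!enorm_sqr -/a -/b (dotC v u) => H.
have [/eqP|ab0] := eqVneq (a * b) 0.
  rewrite mulf_eq0 => /orP[/eqP/enorm_eq0 ->|/eqP/enorm_eq0 ->].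
    by rewrite dot0l mulr_ge0.
  by rewrite dotC dot0l mulr_ge0.
have abp : 0 < a * b by rewrite lt0r ab0 mulr_ge0.
have : (a * b) * (2 * dot u v) <= (a * b) * (2 * (a * b)) by nra.
by rewrite ler_pM2l //; nra.
Qed.

Lemma sqr_add_dot_ge0 {u v : V} {t : R} : enorm u = t -> enorm v = t -> 0 <= t ^+ 2 + dot u v.
Proof.
move=> <- vu; have := cauchy_schwarz u (- v).
rewrite dotNr enormN vu -expr2; lra.
Qed.

Lemma ler_enormD u v : enorm (u + v) <= enorm u + enorm v.
Proof.
rewrite -ler_sqr ?nnegrE ?addr_ge0 ?enorm_ge0 //.
rewrite enorm_sqr dotDl !dotDr sqrrD -!enorm_sqr (dotC v u).
have := cauchy_schwarz u v; lra.
Qed.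

Lemma ler_enorm_distD a b c : enorm (a - c) <= enorm (a - b) + enorm (b - c).
Proof. by have := ler_enormD (a - b) (b - c); rewrite addrA subrK. Qed.

Lemma ler_enormDB u v : enorm u <= enorm (u - v) + enorm v.
Proof. by have := ler_enorm_distD u v 0; rewrite !subr0. Qed.

Lemma enorm_convex (a b : V) (t : R) : 0 <= t <= 1 ->
  enorm ((1 - t) *: a + t *: b) <= (1 - t) * enorm a + t * enorm b.
Proof.
case/andP=> t0 t1; apply: (le_trans (ler_enormD _ _)).
by rewrite !enormZ !ger0_norm ?subr_ge0.
Qed.

Lemma exists_sphere_point_nonparallel (u : V) (t : R) : (1 < n)%N -> 0 < t ->
  exists w : V, [/\ enorm w = t, u + w != 0 & w != u].
Proof.
move=> n_gt1 t0; have n_gt0 := ltn_trans (ltnSn 0) n_gt1.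
pose i0 : 'I_n := Ordinal n_gt0; pose e i : V := t *: delta_mx 0 i.
have e_sphere i : enorm (e i) = t.
  rewrite enormZ gtr0_norm // enormE /dot (bigD1 i) //= big1 ?addr0.
    by rewrite mxE !eqxx mulr1 sqrtr1 mulr1.
  by move=> j /negbTE ji; rewrite mxE ji mul0r.
have e_i0 i : e i ord0 i0 = if i == i0 then t else 0.
  by rewrite !mxE eqxx eq_sym; case: eqP; rewrite ?mulr1 ?mulr0.
have neq0_at (w : V) : w ord0 i0 != 0 -> w != 0.
  by apply: contra => /eqP ->; rewrite mxE.
have coordD (v w : V) : (v + w) ord0 i0 = v ord0 i0 + w ord0 i0 by rewrite mxE.
have coordB (v w : V) : (v - w) ord0 i0 = v ord0 i0 - w ord0 i0 by rewrite !mxE.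
have [u0|u0] := eqVneq (u ord0 i0) 0.
  exists (e i0); split => //; last rewrite -subr_eq0; apply: neq0_at;
    by rewrite ?coordB ?coordD e_i0 eqxx u0 /= ?add0r ?subr0 gt_eqF.
exists (e (Ordinal n_gt1)); split => //; last rewrite -subr_eq0; apply: neq0_at;
  by rewrite ?coordB ?coordD e_i0 /= ?addr0 ?sub0r ?oppr_eq0.
Qed.

End Euclidean.

Section Topology.
Context {R : realType} {n : nat}.
Local Notation V := 'rV[R]_n.
Implicit Types u v w : V.

Lemma mx_normE u : `|u| = \big[Num.max/0]_ij `|u ij.1 ij.2|.
Proof. exact: mx_normrE. Qed.

Lemma mx_norm_le_enorm u : `|u| <= enorm u.
Proof.
rewrite mx_normE; apply: bigmax_le; first exact: enorm_ge0.
move=> [j i] _ /=; rewrite (ord1 j) -ler_sqr ?nnegrE ?enorm_ge0 //.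
rewrite enorm_sqr /dot (bigD1 i) //= -expr2 real_normK ?num_real //.
by rewrite lerDl; apply: sumr_ge0 => k _; rewrite -expr2 sqr_ge0.
Qed.

Lemma enorm_le_mx_norm u : enorm u <= n%:R * `|u|.
Proof.
have coord_le i : `|u ord0 i| <= `|u|.
  by rewrite mx_normE; apply: (le_bigmax _ (fun ij => `|u ij.1 ij.2|) (ord0, i)).
have uu : dot u u <= n%:R * `|u| ^+ 2.
  rewrite /dot -[n in n%:R]card_ord -sum1_card natr_sum mulr_suml.
  apply: ler_sum => i _; rewrite mul1r -expr2 -real_normK ?num_real //.
  by rewrite lerXn2r ?nnegrE.
case: n u coord_le uu => [|m] u _ uu.
  by rewrite enormE /dot big_ord0 sqrtr0 mul0r.
apply: enorm_le_sqr; first by rewrite mulr_ge0.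
apply: (le_trans uu); rewrite exprMn ler_wpM2r ?exprn_ge0 //.
by rewrite expr2 ler_peMl ?ler0n // ler1n.
Qed.

Lemma enorm_lt_of_mx_norm u (e : R) : 0 < e -> `|u| < e / (n%:R + 1) -> enorm u < e.
Proof.
move=> e0 ue; have n1 : 0 < n%:R + 1 :> R by rewrite ltr_pwDr // ler0n.
apply: (le_lt_trans (enorm_le_mx_norm u)).
apply: (le_lt_trans (y := (n%:R + 1) * `|u|)); first by rewrite ler_wpM2r // lerDl.
by rewrite -ltr_pdivlMl // mulrC.
Qed.

Lemma continuous_enorm_dist (q : V) : continuous (fun e : V => enorm (q - e)).
Proof.
move=> x; apply/(@cvgrPdist_lt _ _ _ _ (nbhs_filter x)) => eps eps0.
have n1 : 0 < n%:R + 1 :> R by rewrite ltr_pwDr // ler0n.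
apply/nbhs_ballP; exists (eps / (n%:R + 1)); first exact: divr_gt0.
move=> y; rewrite -ball_normE /= => /(enorm_lt_of_mx_norm _ _ eps0) xy.
have := ler_enorm_distD q y x; have := ler_enorm_distD q x y.
rewrite (enorm_distC y x) ltr_norml; lra.
Qed.

Lemma open_enorm_ball (c : V) (r : R) : open [set w | enorm (w - c) < r].
Proof.
have -> : [set w | enorm (w - c) < r] = (fun w => enorm (c - w)) @^-1` [set s | s < r].
  by apply/seteqP; split => w /=; rewrite enorm_distC.
by apply: open_comp; [move=> w _; exact: continuous_enorm_dist | exact: open_lt].
Qed.

Lemma closed_enorm_le (r : R) : closed [set w : V | enorm w <= r].
Proof.
have -> : [set w : V | enorm w <= r] = (fun w => enorm (0 - w)) @^-1` [set s | s <= r].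
  by apply/seteqP; split => w /=; rewrite sub0r enormN.
by apply: preimage_closed; [move=> w _; exact: continuous_enorm_dist | exact: closed_le].
Qed.

Lemma closed_enorm_adherent (S : set V) (b : V) : closed S ->
  (forall e, 0 < e -> exists w, S w /\ enorm (w - b) < e) -> S b.
Proof.
move=> Scl adh; apply: Scl => B /nbhs_ballP [e e0 eB].
have [w [Sw we]] := adh e e0.
exists w; split => //; apply: eB; rewrite -ball_normE /=.
by apply: (le_lt_trans (mx_norm_le_enorm _)); rewrite enorm_distC.
Qed.

Lemma cvg_enorm_harmonic (f : nat -> V) (x0 : V) (C : R) :
  (forall k, enorm (f k - x0) <= C / k.+1%:R) -> f @ \oo --> x0.
Proof.
move=> fC; apply/cvgrPdist_lt => eps eps0.
near=> k; apply: (le_lt_trans (mx_norm_le_enorm _)); rewrite enorm_distC.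
apply: (le_lt_trans (fC k)).
rewrite ltr_pdivrMr // -ltr_pdivrMl // mulrC.
have kC : C / eps <= k%:R by near: k; apply: nbhs_infty_ger.
by apply: (le_lt_trans kC); rewrite ltr_nat.
Unshelve. all: by end_near.
Qed.

Lemma compact_in_unit_ball {E : set V} : closed E -> E `<=` eball 0 1 -> compact E.
Proof.
move=> Ecl E1; apply: bounded_closed_compact => //; exists 1; split => // M M1 x Ex /=.
apply: (le_trans (mx_norm_le_enorm x)); apply/ltW/(lt_trans _ M1).
by move/E1: Ex; rewrite /eball /euclid_dist /= subr0.
Qed.

Lemma isolated_enorm {E : set V} {b : V} : E b ->
  (exists2 r, 0 < r & forall e, E e -> enorm (e - b) < r -> e = b) -> isolated E b.
Proof.
move=> Eb [r r0 rb]; split; first exact: mem_set.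
exists [set w | enorm (w - b) < r].
  by apply: open_nbhs_nbhs; split; [exact: open_enorm_ball | rewrite /= subrr enorm0].
apply/seteqP; split => [w [wb Ew]|w ->]; first exact: rb.
by split => //; rewrite /= subrr enorm0.
Qed.

Lemma not_isolated_enorm (E : set V) (b : V) :
  (forall r, 0 < r -> exists e, [/\ E e, e != b & enorm (e - b) < r]) -> ~ isolated E b.
Proof.
move=> accum [_ [U /nbhs_ballP[r r0 rU] UE]].
have [e [Ee eb er]] := accum r r0.
have : (U `&` E) e.
  split => //; apply: rU; rewrite -ball_normE /= enorm_distC in er *.
  exact: le_lt_trans (mx_norm_le_enorm _) er.
by rewrite UE => /eqP; rewrite (negbTE eb).
Qed.

Definition nearest (E : set V) (q y : V) :=
  E y /\ forall e, E e -> enorm (q - y) <= enorm (q - e).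

Lemma exists_nearest (E : set V) (q : V) : compact E -> E !=set0 ->
  exists y, nearest E q y.
Proof.
move=> Ecpt E0.
have [c Ec cmin] := EVT_min_rV E0 Ecpt (continuous_subspaceT (continuous_enorm_dist q)).
by exists c; split; [rewrite inE in Ec | move=> e Ee; apply: cmin; rewrite inE].
Qed.

End Topology.

Section Segments.
Context {R : realType} {n : nat}.
Local Notation V := 'rV[R]_n.
Implicit Types a b u v x : V.

Definition lerp a b (l : R) : V := a + l *: (b - a).

Lemma lerp0 a b : lerp a b 0 = a.
Proof. by rewrite /lerp scale0r addr0. Qed.

Lemma lerp1 a b : lerp a b 1 = b.
Proof. by rewrite /lerp scale1r addrC subrK. Qed.

Lemma lerpE a b l : lerp a b l = (1 - l) *: a + l *: b.
Proof. by rewrite /lerp scalerBr scalerBl scale1r addrAC addrA. Qed.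

Lemma lerp_subl a b l : lerp a b l - a = l *: (b - a).
Proof. by rewrite /lerp addrAC subrr add0r. Qed.

Lemma lerpB a b l l' : lerp a b l - lerp a b l' = (l - l') *: (b - a).
Proof. by rewrite /lerp opprD addrACA subrr add0r scalerBl. Qed.

Lemma enorm_lerpB a b l l' :
  enorm (lerp a b l - lerp a b l') = `|l - l'| * enorm (b - a).
Proof. by rewrite lerpB enormZ. Qed.

Lemma lerp_subr a b x l : lerp a b l - x = lerp (a - x) (b - x) l.
Proof. by rewrite /lerp opprB addrA subrK addrAC. Qed.

Lemma enorm_lerp_le u v (t l : R) : enorm u <= t -> enorm v <= t -> 0 <= l <= 1 ->
  enorm (lerp u v l) <= t.
Proof.
move=> ut vt /andP[l0 l1]; rewrite lerpE.
apply: (le_trans (enorm_convex _ _ _ _)); first exact/andP.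
have : (1 - l) * enorm u <= (1 - l) * t by rewrite ler_wpM2l // subr_ge0.
have : l * enorm v <= l * t by rewrite ler_wpM2l.
lra.
Qed.

Lemma enorm_lerp_sphere_ge u v (t l : R) : enorm u = t -> enorm v = t ->
  0 <= dot u v -> 0 <= l <= 1 -> 7 * t / 10 <= enorm (lerp u v l).
Proof.
move=> ut vt uv0 /andP[l0 l1]; have t0 : 0 <= t by rewrite -ut enorm_ge0.
have lerp_sqr : dot (lerp u v l) (lerp u v l) =
    (1 - l) ^+ 2 * t ^+ 2 + l ^+ 2 * t ^+ 2 + 2 * l * (1 - l) * dot u v.
  rewrite lerpE !dotDl !dotDr !dotZl !dotZr -!enorm_sqr ut vt (dotC v u); ring.
apply: enorm_ge_sqr; first lra.
have : 0 <= l * (1 - l) * dot u v by rewrite !mulr_ge0 // subr_ge0.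
have : 0 <= t ^+ 2 * (l - 1/2) ^+ 2 by rewrite mulr_ge0 // sqr_ge0.
rewrite lerp_sqr; nra.
Qed.

Lemma enorm_sphereB {u v : V} {t : R} : enorm u = t -> enorm v = t -> 0 <= dot u v ->
  enorm (v - u) <= 3 * t / 2.
Proof.
move=> ut vt uv0; have t0 : 0 <= t by rewrite -ut enorm_ge0.
apply: enorm_le_sqr; first lra.
rewrite dotBl !dotBr -!enorm_sqr ut vt (dotC v u); nra.
Qed.

End Segments.

Lemma exists_geometric_bracket {R : realType} (q r L : R) : 1 < q -> 0 < r -> r <= L ->
  exists j, L < q ^+ j * r <= q * L.
Proof.
move=> q1 r0 rL.
have bernoulli k : 1 + k%:R * (q - 1) <= q ^+ k.
  elim: k => [|k IH]; first by rewrite mul0r addr0 expr0.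
  have := ler_wpM2r (ltW (lt_trans ltr01 q1)) IH.
  have : 0 <= k%:R * (q - 1) ^+ 2 by rewrite mulr_ge0 ?sqr_ge0.
  rewrite [q ^+ k.+1]exprSr mulrSr; nra.
have unbounded : exists k, L < q ^+ k * r.
  have Lr0 : 0 <= L / (r * (q - 1)) by rewrite divr_ge0 ?mulr_ge0 // ?ltW ?subr_gt0 //; lra.
  exists (Num.bound (L / (r * (q - 1)))); have := archi_boundP Lr0.
  set K := (Num.bound _)%:R; rewrite ltr_pdivrMr ?mulr_gt0 ?subr_gt0 // => LK.
  apply: (lt_le_trans _ (ler_wpM2r (ltW r0) (bernoulli _))); rewrite -/K; nra.
case: (ex_minnP unbounded) => -[|k] Lk kmin.
  by move: Lk; rewrite expr0 mul1r ltNge rL.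
exists k.+1; rewrite Lk exprS -mulrA ler_pM2l ?(lt_trans ltr01) //.
by rewrite leNgt; apply/negP => /kmin; rewrite ltnn.
Qed.

Lemma exists_pos_lt2 {R : realFieldType} {a c : R} : 0 < a -> 0 < c ->
  exists th, [/\ 0 < th, th < a & th < c].
Proof.
move=> a0 c0; have ac : 0 < a + c by rewrite addr_gt0.
exists (a * c / (a + c)); split; first by rewrite divr_gt0 ?mulr_gt0.
  by rewrite ltr_pdivrMr //; nra.
by rewrite ltr_pdivrMr //; nra.
Qed.

Section Stability.
Context {R : realType} {n : nat}.
Local Notation V := 'rV[R]_n.
Implicit Types a b c e p q x y : V.

Definition nearest_within (E : set V) q x (D : R) :=
  forall y, nearest E q y -> enorm (y - x) <= D.

(* Written [100 * 100] because [lra] would unfold the unary numeral [10000]. *)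
Definition stab_ratio : R := 100 * 100.

Lemma stab_ratio_gt0 : 0 < stab_ratio.
Proof. by rewrite /stab_ratio mulr_gt0. Qed.

Definition stable_at (E : set V) p := forall x p' y, nearest E p x ->
  enorm (p' - p) < enorm (p - x) / 4 -> nearest E p' y ->
  enorm (x - y) < enorm (p - x) / stab_ratio.

Definition stable_near (E : set V) x0 (d0 : R) :=
  forall p, ~ E p -> enorm (p - x0) < d0 -> stable_at E p.

Definition compl_adherent (E : set V) (b : V) :=
  forall d, 0 < d -> exists p, ~ E p /\ enorm (p - b) < d.

Lemma nearest_self (E : set V) q : E q -> nearest E q q.
Proof. by move=> Eq; split => // e _; rewrite subrr enorm0 enorm_ge0. Qed.

Lemma nearest_within_le (E : set V) q x (D D' : R) :
  nearest_within E q x D -> D <= D' -> nearest_within E q x D'.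
Proof. by move=> qD DD' y /qD/le_trans; apply. Qed.

Lemma nearest_within_stable {E : set V} {p x : V} : ~ E p -> stable_at E p ->
  nearest E p x -> nearest_within E p x (enorm (p - x) / 100).
Proof.
move=> nEp pst [Ex xmin] y py.
have px0 : 0 < enorm (p - x) by apply: enorm_dist_gt0; apply/eqP => px; apply: nEp; rewrite px.
have pp : enorm (p - p) < enorm (p - x) / 4 by rewrite subrr enorm0 divr_gt0.
have := pst x p y (conj Ex xmin) pp py; rewrite enorm_distC /stab_ratio; lra.
Qed.

Lemma nearest_within_far_ge {E : set V} {c x : V} {t : R} :
  (forall q, exists y, nearest E q y) -> enorm (c - x) = t ->
  nearest_within E c x (t / 25) -> forall e, E e -> 24 * t / 25 <= enorm (c - e).
Proof.
move=> NE cx cD e Ee; have [y [Ey ymin]] := NE c.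
have := ymin e Ee; have := cD y (conj Ey ymin); have := ler_enorm_distD c y x.
rewrite cx; lra.
Qed.

Context {E : set V} {x0 : V} {d0 : R}.
Hypothesis NE : forall q, exists y, nearest E q y.
Hypothesis Estable : stable_near E x0 d0.

Lemma nearest_within_step {q q' x : V} {D : R} :
  enorm (q - x0) < d0 -> nearest_within E q x D -> D < enorm (q - x) ->
  enorm (q' - q) < (enorm (q - x) - D) / 4 ->
  nearest_within E q' x (D + (enorm (q - x) + D) / stab_ratio).
Proof.
move=> qx0 qD Dq qq'.
have nEq : ~ E q by move=> /nearest_self/qD; lra.
have [y qy] := NE q; have yx := qD y qy.
have := ler_enorm_distD q y x; have := ler_enorm_distD q x y.
rewrite (enorm_distC x y) => qyx qxy y' q'y'.
have /(@Estable q nEq qx0 y q' y' qy)/(_ q'y') yy' : enorm (q' - q) < enorm (q - y) / 4 by lra.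
have := ler_enorm_distD y' y x; rewrite (enorm_distC y' y).
have : enorm (q - y) / stab_ratio <= (enorm (q - x) + D) / stab_ratio.
  by rewrite ler_pM2r /stab_ratio //; lra.
lra.
Qed.

Lemma nearest_within_arc_step {q q' x : V} {t D : R} : 0 < t ->
  7 * t / 10 <= enorm (q - x) <= t -> enorm (x - x0) + t < d0 ->
  nearest_within E q x D -> D <= t / 10 + t / 250 -> enorm (q' - q) <= 3 * t / 32 ->
  nearest_within E q' x (D + t / 4000).
Proof.
move=> t0 /andP[qx_ge qx_le] reg qD Dt qq'.
have qx0 : enorm (q - x0) < d0 by have := ler_enorm_distD q x x0; lra.
apply: nearest_within_le (nearest_within_step qx0 qD _ _) _; [lra | lra |].
rewrite lerD2l ler_pdivrMr ?stab_ratio_gt0 // /stab_ratio; lra.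
Qed.

Lemma nearest_within_arc {x a b : V} {t D : R} : 0 < t ->
  enorm (a - x) = t -> enorm (b - x) = t -> 0 <= dot (a - x) (b - x) ->
  enorm (x - x0) + t < d0 -> nearest_within E a x D -> D <= t / 10 ->
  nearest_within E b x (D + t / 250).
Proof.
move=> t0 ax bx ab0 reg aD Dt.
have ba : enorm (b - a) <= 3 * t / 2.
  by have := enorm_sphereB ax bx ab0; rewrite opprB addrA subrK.
(* 16 chord steps of length at most [3 t / 32], at distance at least [7 t / 10] from [x]. *)
have chord k : (k <= 16)%N ->
    nearest_within E (lerp a b (k%:R / 16)) x (D + k%:R * t / 4000).
  elim: k => [_|k IH k16]; first by rewrite !mul0r lerp0 addr0.
  have k_le : k%:R <= 16 :> R by rewrite ler_nat ltnW.
  have lk : 0 <= (k%:R / 16 : R) <= 1.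
    by rewrite divr_ge0 // ler_pdivrMr // mul1r.
  have qx : 7 * t / 10 <= enorm (lerp a b (k%:R / 16) - x) <= t.
    rewrite lerp_subr; apply/andP; split; first exact: enorm_lerp_sphere_ge.
    by apply: enorm_lerp_le => //; rewrite ?ax ?bx.
  have step : enorm (lerp a b (k.+1%:R / 16) - lerp a b (k%:R / 16)) <= 3 * t / 32.
    rewrite enorm_lerpB -mulrBl -natrB // subSnn ger0_norm //; lra.
  have kt : k%:R * t <= 16 * t by rewrite ler_pM2r.
  apply: nearest_within_le (nearest_within_arc_step t0 qx reg (IH (ltnW k16)) _ step) _.
    lra.
  rewrite -addn1 natrD; lra.
have := chord 16%N (leqnn _); rewrite divff // lerp1 => /nearest_within_le; apply.
lra.
Qed.

Lemma nearest_within_sphere_nonantipodal {x a b : V} {t D : R} : 0 < t ->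
  enorm (a - x) = t -> enorm (b - x) = t -> (a - x) + (b - x) != 0 ->
  enorm (x - x0) + t < d0 -> nearest_within E a x D -> D <= t / 20 ->
  nearest_within E b x (D + t / 125).
Proof.
move=> t0 ax bx ab0 reg aD Dt.
set u := a - x in ax ab0; set v := b - x in bx ab0.
have s0 := enorm_gt0 ab0; set s := enorm (u + v) in s0.
(* [c] lies on the sphere in the direction [u + v], at angle at most pi/2 from both. *)
pose c := x + (t / s) *: (u + v).
have cx : c - x = (t / s) *: (u + v) by rewrite /c addrAC subrr add0r.
have ts0 : 0 <= t / s by rewrite divr_ge0 // ltW.
have c_sphere : enorm (c - x) = t.
  by rewrite cx enormZ ger0_norm // -mulrA mulVf ?mulr1 // gt_eqF.
have uc : 0 <= dot u (c - x).
  by rewrite cx dotZr dotDr -enorm_sqr ax mulr_ge0 // (sqr_add_dot_ge0 ax bx).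
have cv : 0 <= dot (c - x) v.
  rewrite cx dotZl dotDl -(enorm_sqr v) bx mulr_ge0 // addrC dotC.
  exact: sqr_add_dot_ge0 bx ax.
have cD : nearest_within E c x (D + t / 250).
  by apply: (nearest_within_arc t0 ax c_sphere uc reg aD); lra.
apply: nearest_within_le (nearest_within_arc t0 c_sphere bx cv reg cD _) _; lra.
Qed.

Lemma nearest_within_sphere {x a b : V} {t D : R} : (1 < n)%N -> 0 < t ->
  enorm (a - x) = t -> enorm (b - x) = t -> enorm (x - x0) + t < d0 ->
  nearest_within E a x D -> D <= t / 100 -> nearest_within E b x (D + t / 50).
Proof.
move=> n_gt1 t0 ax bx reg aD Dt.
have [ab0|ab] := eqVneq ((a - x) + (b - x)) 0; last first.
  apply: nearest_within_le (nearest_within_sphere_nonantipodal t0 ax bx ab reg aD _) _;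
    lra.
have [w [wt aw wa]] := exists_sphere_point_nonparallel (a - x) t n_gt1 t0.
pose c := x + w.
have cx : c - x = w by rewrite /c addrAC subrr add0r.
have c_sphere : enorm (c - x) = t by rewrite cx.
have ac : (a - x) + (c - x) != 0 by rewrite cx.
have bxa : b - x = - (a - x) by apply/eqP; rewrite -addr_eq0 addrC ab0.
have cb : (c - x) + (b - x) != 0 by rewrite cx bxa subr_eq0.
have cD : nearest_within E c x (D + t / 125).
  by apply: (nearest_within_sphere_nonantipodal t0 ax c_sphere ac reg aD); lra.
apply: nearest_within_le (nearest_within_sphere_nonantipodal t0 c_sphere bx cb reg cD _) _;
  lra.
Qed.

Lemma nearest_within_radial {x p : V} (j : nat) :
  0 < enorm (p - x) -> nearest_within E p x (enorm (p - x) / 100) ->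
  enorm (x - x0) + (6/5) ^+ j * enorm (p - x) < d0 ->
  nearest_within E (lerp x p ((6/5) ^+ j)) x ((6/5) ^+ j * enorm (p - x) / 100).
Proof.
move=> rho0 pD; elim: j => [_|j IH]; first by rewrite expr0 lerp1 mul1r.
set rho := enorm (p - x) in rho0 pD IH *; set T := (6/5 : R) ^+ j in IH *.
have T0 : 0 < T by rewrite exprn_gt0.
have TR : 0 < T * rho by rewrite mulr_gt0.
rewrite exprSr -/T => reg.
have qD := IH (ltac:(lra)).
have qx : enorm (lerp x p T - x) = T * rho by rewrite lerp_subl enormZ gtr0_norm.
have qx0 : enorm (lerp x p T - x0) < d0.
  by have := ler_enorm_distD (lerp x p T) x x0; lra.
have step : enorm (lerp x p (T * (6/5)) - lerp x p T) = T * rho / 5.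
  rewrite enorm_lerpB ger0_norm -/rho; first lra.
  by rewrite subr_ge0 ler_peMr //; lra.
apply: nearest_within_le (nearest_within_step qx0 qD _ _) _; rewrite ?qx ?step; [lra | lra|].
have : (T * rho + T * rho / 100) / stab_ratio <= T * rho / 500.
  by rewrite ler_pdivrMr ?stab_ratio_gt0 // /stab_ratio; lra.
lra.
Qed.

Lemma nearest_within_scaled_sphere {p x c : V} (j : nat) : (1 < n)%N ->
  ~ E p -> enorm (p - x0) < d0 -> nearest E p x ->
  enorm (x - x0) + (6/5) ^+ j * enorm (p - x) < d0 ->
  enorm (c - x) = (6/5) ^+ j * enorm (p - x) ->
  nearest_within E c x ((6/5) ^+ j * enorm (p - x) / 25).
Proof.
move=> n_gt1 nEp px0 px reg cx.
have rho0 : 0 < enorm (p - x).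
  by apply: enorm_dist_gt0; apply/eqP => ep; apply: nEp; rewrite ep; case: px.
have aD := nearest_within_radial j rho0 (nearest_within_stable nEp (Estable p nEp px0) px) reg.
set t := (6/5 : R) ^+ j * enorm (p - x) in reg cx aD *.
have t0 : 0 < t by rewrite mulr_gt0 ?exprn_gt0.
have ax : enorm (lerp x p ((6/5) ^+ j) - x) = t.
  by rewrite lerp_subl enormZ ger0_norm ?exprn_ge0.
apply: nearest_within_le (nearest_within_sphere n_gt1 t0 ax cx reg aD _) _; lra.
Qed.

Lemma stable_near_close_eq (e : V) : (1 < n)%N -> E x0 -> 0 < d0 ->
  compl_adherent E x0 ->
  E e -> enorm (e - x0) < d0 / 32 -> e = x0.
Proof.
move=> n_gt1 Ex0 d0_gt0 adh Ee es; apply: contrapT => /eqP ex0.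
have s0 := enorm_dist_gt0 ex0; set s := enorm (e - x0) in s0 es.
have [p [nEp ps]] := adh (s / 10) (divr_gt0 s0 (ltr0n _ 10)).
have [x [Ex xmin]] := NE p; have rho_le := xmin x0 Ex0.
have rho0 : 0 < enorm (p - x).
  by apply: enorm_dist_gt0; apply/eqP => px; apply: nEp; rewrite px.
have xx0 : enorm (x - x0) < 2 * s / 10.
  by have := ler_enorm_distD x p x0; rewrite (enorm_distC x p); lra.
have := ler_enorm_distD e x x0; have := ler_enorm_distD e x0 x.
rewrite -/s (enorm_distC x0 x); set s' := enorm (e - x) => s'_hi s'_lo.
have [j /andP[Lt tL]] : exists j, 10 * s' / 19 < (6/5) ^+ j * enorm (p - x) <= 6/5 * (10 * s' / 19).
  by apply: exists_geometric_bracket => //; lra.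
set t := _ * enorm (p - x) in Lt tL.
(* With [10 s' / 19 < t <= 12 s' / 19], [|c - e| = s' - t < 24 t / 25]. *)
have s'0 : 0 < s' by lra.
pose c := lerp x e (t / s').
have cx : enorm (c - x) = t.
  by rewrite lerp_subl enormZ -/s' ger0_norm ?divfK ?gt_eqF // divr_ge0 //; lra.
have reg : enorm (x - x0) + t < d0 by lra.
have cD := nearest_within_scaled_sphere j n_gt1 nEp (ltac:(lra)) (conj Ex xmin) reg cx.
have := nearest_within_far_ge NE cx cD e Ee.
have ce : c - e = lerp x e (t / s') - lerp x e 1 by rewrite lerp1.
rewrite ce enorm_lerpB -/s' ler0_norm; last by rewrite subr_le0 ler_pdivrMr // mul1r; lra.
rewrite mulNr mulrBl divfK ?gt_eqF // mul1r; lra.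
Qed.

End Stability.

Section Configuration.
Context {R : realType} {n : nat}.
Local Notation V := 'rV[R]_n.
Implicit Types a c p q w x y : V.

Lemma Vcone_sub_ball {a c q : V} {r M : R} : enorm (a - q) <= M -> enorm (c - q) + r <= M ->
  Vcone a c r `<=` [set w | enorm (w - q) < M].
Proof.
move=> aM cM _ [t [y [t0 [t1 [yc ->]]]]] /=.
have -> : (1 - t) *: a + t *: y - q = (1 - t) *: (a - q) + t *: (y - q).
  by rewrite !scalerBr addrACA -opprD -scalerDl subrK scale1r.
apply: (le_lt_trans (enorm_convex _ _ _ _)); first by rewrite !ltW.
have := ler_enorm_distD y c q; move: yc; rewrite /eball /euclid_dist /= => yc yq.
have : (1 - t) * enorm (a - q) <= (1 - t) * M by rewrite ler_wpM2l // subr_ge0 ltW.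
have : t * enorm (y - q) < t * M by rewrite ltr_pM2l //; lra.
lra.
Qed.

Lemma Vcone_sub_compl {E : set V} {q x c : V} {r : R} : nearest E q x ->
  enorm (c - q) + r <= enorm (q - x) -> Vcone x c r `<=` ~` E.
Proof.
move=> [_ xmin] cr w; have xq : enorm (x - q) <= enorm (q - x) by rewrite enorm_distC.
move=> /(Vcone_sub_ball xq cr) /= wq Ew.
by have := xmin w Ew; rewrite (enorm_distC q w); lra.
Qed.

Lemma Vcone_sub_ball_compl {E : set V} {q x c : V} {r : R} : nearest E q x ->
  enorm x <= 1 -> enorm c + r <= 1 -> enorm (c - q) + r <= enorm (q - x) ->
  Vcone x c r `<=` eball 0 1 `\` E.
Proof.
move=> qx x1 c1 cq w wV; split; last exact: Vcone_sub_compl qx cq w wV.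
by rewrite -(subr0 x) -(subr0 c) in x1 c1; apply: (Vcone_sub_ball x1 c1).
Qed.

Definition config_triple (E : set V) (a beta : R) x y z :=
  [/\ eball 0 (1 / 2) x /\ eball 0 (1 / 2) y /\ eball 0 (1 / 2) z,
      E x /\ E y /\ ~ E z,
      euclid_dist x y / a < euclid_dist x z /\ euclid_dist x z < a * euclid_dist x y /\
      euclid_dist x y / a < euclid_dist y z /\ euclid_dist y z < a * euclid_dist x y &
      Vcone x z (beta * euclid_dist x y) `<=` eball 0 1 `\` E /\
      Vcone y z (beta * euclid_dist x y) `<=` eball 0 1 `\` E].

Lemma unstable_config_triple {E : set V} {x0 p : V} {del : R} :
  E x0 -> enorm x0 <= 1/4 -> del <= 1/16 -> ~ E p -> enorm (p - x0) < del ->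
  ~ stable_at E p -> exists x y, config_triple E (2 * stab_ratio) (1/10) x y p /\
    enorm (x - x0) <= 3 * del /\ enorm (y - x0) <= 3 * del.
Proof.
move=> Ex0 x0n del16 nEp px0 /existsNP[x /existsNP[p' /existsNP[y]]].
move=> /not_implyP[px /not_implyP[pp' /not_implyP[p'y /negP]]].
rewrite -leNgt ler_pdivrMr ?stab_ratio_gt0 // /stab_ratio => rhoK.
have rho0 : 0 < enorm (p - x).
  by apply: enorm_dist_gt0; apply/eqP => ex; apply: nEp; rewrite ex; case: px.
have [[Ex xmin] [Ey ymin]] := (px, p'y).
have := xmin x0 Ex0; have := xmin y Ey; have := ymin x Ex.
have := ler_enorm_distD p' p x; have := ler_enorm_distD p p' y.
have := ler_enorm_distD x p y; have := ler_enorm_distD x p x0.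
have := ler_enorm_distD y p x0; have := ler_enormDB x x0; have := ler_enormDB y x0.
have := ler_enormDB p x0.
rewrite (enorm_distC p p') (enorm_distC y p) (enorm_distC x p) => *.
exists x, y; split; last lra.
rewrite /config_triple /eball /euclid_dist /= !subr0 (enorm_distC x p) (enorm_distC y p).
split; [lra | by [] | |].
  rewrite !ltr_pdivrMr ?mulr_gt0 //; lra.
split; first by apply: (Vcone_sub_ball_compl px); rewrite ?subrr ?enorm0; lra.
by apply: (Vcone_sub_ball_compl p'y); rewrite ?(enorm_distC p p'); lra.
Qed.

Definition forbidden_configuration (E : set V) : Prop :=
  exists (x0 : V) (x y z : nat -> V) (a beta : R),
    1 < a /\ 0 < beta /\
    (forall k, eball 0 (1 / 2) (x k) /\ eball 0 (1 / 2) (y k) /\ eball 0 (1 / 2) (z k)) /\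
    (forall k, E (x k) /\ E (y k) /\ ~ E (z k)) /\
    x @ \oo --> x0 /\ y @ \oo --> x0 /\ z @ \oo --> x0 /\
    (forall k,
       euclid_dist (x k) (y k) / a < euclid_dist (x k) (z k) /\
       euclid_dist (x k) (z k) < a * euclid_dist (x k) (y k) /\
       euclid_dist (x k) (y k) / a < euclid_dist (y k) (z k) /\
       euclid_dist (y k) (z k) < a * euclid_dist (x k) (y k)) /\
    (forall k,
       Vcone (x k) (z k) (beta * euclid_dist (x k) (y k)) `<=` eball 0 1 `\` E /\
       Vcone (y k) (z k) (beta * euclid_dist (x k) (y k)) `<=` eball 0 1 `\` E).

Lemma forbidden_of_unstable_near {E : set V} {x0 : V} : E x0 -> enorm x0 <= 1/4 ->
  (forall del, 0 < del -> exists p, [/\ ~ E p, enorm (p - x0) < del & ~ stable_at E p]) ->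
  forbidden_configuration E.
Proof.
move=> Ex0 x0n unstable.
have triple k : exists xyz : V * V * V,
    config_triple E (2 * stab_ratio) (1/10) xyz.1.1 xyz.1.2 xyz.2 /\
    [/\ enorm (xyz.1.1 - x0) <= (3/16) / k.+1%:R, enorm (xyz.1.2 - x0) <= (3/16) / k.+1%:R
       & enorm (xyz.2 - x0) <= (3/16) / k.+1%:R].
  have [del [del0 del16 del3]] :
      exists del : R, [/\ 0 < del, del <= 1/16 & 3 * del = (3/16) / k.+1%:R].
    have k0 : 0 < k.+1%:R :> R by rewrite ltr0n.
    exists ((1/16) / k.+1%:R); split; first by rewrite divr_gt0.
      by rewrite ler_pdivrMr // ler_peMr // ler1n.
    by rewrite mulrA mul1r.
  have [p [nEp px0 pst]] := unstable _ del0.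
  have [x [y [cfg [xx0 yx0]]]] := unstable_config_triple Ex0 x0n del16 nEp px0 pst.
  by exists (x, y, p); split => //=; rewrite -del3; split => //; lra.
have [f /all_and2[cfg near]] := choice triple.
exists x0, (fun k => (f k).1.1), (fun k => (f k).1.2), (fun k => (f k).2).
exists (2 * stab_ratio), (1/10).
have conv (g : nat -> V) : (forall k, enorm (g k - x0) <= (3/16) / k.+1%:R) -> g @ \oo --> x0.
  exact: cvg_enorm_harmonic.
split; first by rewrite /stab_ratio; lra.
split; first lra.
do 2 (split; first by move=> k; case: (cfg k)).
do 3 (split; first by apply: conv => k; case: (near k)).
by split => k; case: (cfg k).
Qed.

End Configuration.

Section SegmentExit.
Context {R : realType} {n : nat}.
Local Notation V := 'rV[R]_n.
Context {E : set V} {x0 q : V} {del : R}.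
Hypotheses (Eclosed : closed E) (del0 : 0 < del)
  (x0_interior : forall p, enorm (p - x0) < del -> E p) (nEq : ~ E q).

Let S := [set s : R | 0 <= s <= 1 /\ forall s', 0 <= s' <= s -> E (lerp x0 q s')].
Let ts := sup S.
Let Q := enorm (q - x0).

Let Q0 : 0 < Q.
Proof.
apply: enorm_dist_gt0; apply/eqP => qx0; apply: nEq; apply: x0_interior.
by rewrite qx0 subrr enorm0.
Qed.

Let lerp_dist s s' : enorm (lerp x0 q s - lerp x0 q s') = `|s - s'| * Q.
Proof. exact: enorm_lerpB. Qed.

Let S_sup : has_sup S.
Proof.
split; last by exists 1 => s [/andP[_ s1] _].
exists 0; split; first by rewrite lexx ler01.
move=> s' s'0; have -> : s' = 0 by apply/eqP; rewrite eq_le andbC.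
by rewrite lerp0; apply: x0_interior; rewrite subrr enorm0.
Qed.

Let below s : 0 <= s -> s < ts -> E (lerp x0 q s).
Proof.
move=> s0 sts; have e0 : 0 < ts - s by rewrite subr_gt0.
have [s'' [_ Ss''] ts_s''] := sup_adherent e0 S_sup.
by apply: Ss''; rewrite s0 /=; apply: ltW; rewrite -/ts in ts_s''; lra.
Qed.

Let ts_gt0 : 0 < ts.
Proof.
have [s [s0 s1 sQ]] := exists_pos_lt2 ltr01 (divr_gt0 del0 Q0).
apply: (lt_le_trans s0); apply: sup_upper_bound => //; split; first by rewrite !ltW.
move=> s' /andP[s'0 s's]; apply: x0_interior.
rewrite -{2}(lerp0 x0 q) lerp_dist subr0 ger0_norm // -ltr_pdivlMr //.
exact: le_lt_trans s's sQ.
Qed.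

Let E_exit : E (lerp x0 q ts).
Proof.
apply: closed_enorm_adherent => // eps eps0.
have [th [th0 thts thQ]] := exists_pos_lt2 ts_gt0 (divr_gt0 eps0 Q0).
exists (lerp x0 q (ts - th)); split; first by apply: below; lra.
rewrite lerp_dist (_ : ts - th - ts = - th); last by ring.
by rewrite normrN gtr0_norm // -ltr_pdivlMr.
Qed.

Let ts_lt1 : ts < 1.
Proof.
have ts1 : ts <= 1 by apply: ge_sup; [exact: S_sup.1 | move=> s [/andP[]]].
rewrite lt_neqAle ts1 andbT; apply/eqP => ts_eq1.
by move: E_exit; rewrite ts_eq1 lerp1.
Qed.

Let exit_compl_adherent : compl_adherent E (lerp x0 q ts).
Proof.
move=> d d0; have ts1 : 0 < 1 - ts by rewrite subr_gt0.
have ts0 := ts_gt0.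
have [th [th0 th1 thQ]] := exists_pos_lt2 ts1 (divr_gt0 d0 Q0).
have nS : ~ S (ts + th) by move=> /(sup_upper_bound S_sup); rewrite -/ts; lra.
have [s' [/andP[s'0 s'th] nEs']] : exists s', 0 <= s' <= ts + th /\ ~ E (lerp x0 q s').
  apply: contrapT => all_in; apply: nS; split; first by apply/andP; split; lra.
  by move=> s' s'I; apply: contrapT => nE; apply: all_in; exists s'.
have ts_s' : ts <= s' by rewrite leNgt; apply/negP => s'ts; apply: nEs'; apply: below.
exists (lerp x0 q s'); split => //.
by rewrite lerp_dist ger0_norm ?subr_ge0 // -ltr_pdivlMr //; lra.
Qed.

Let exit_not_isolated : ~ isolated E (lerp x0 q ts).
Proof.
apply: not_isolated_enorm => r r0.
have [th [th0 thts thQ]] := exists_pos_lt2 ts_gt0 (divr_gt0 r0 Q0).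
have dist_th : enorm (lerp x0 q (ts - th) - lerp x0 q ts) = th * Q.
  by rewrite lerp_dist (_ : ts - th - ts = - th) ?normrN ?gtr0_norm //; ring.
exists (lerp x0 q (ts - th)); split; first by apply: below; lra.
  apply/eqP => eb; move: dist_th; rewrite eb subrr enorm0 => /esym/eqP.
  by rewrite mulf_eq0 !gt_eqF.
by rewrite dist_th -ltr_pdivlMr.
Qed.

Lemma segment_exit : exists2 s, 0 <= s <= 1 &
  [/\ E (lerp x0 q s), compl_adherent E (lerp x0 q s) & ~ isolated E (lerp x0 q s)].
Proof.
exists ts; first by rewrite (ltW ts_gt0) (ltW ts_lt1).
by split; [exact: E_exit | exact: exit_compl_adherent | exact: exit_not_isolated].
Qed.

End SegmentExit.

Lemma compact_isolated_finite (T : ptopologicalType) (A K : set T) :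
  compact K -> K `<=` isolated A -> finite_set K.
Proof.
move=> Kcpt Kiso.
have isoU x : exists U, K x -> [/\ open U, U x & U `&` A `<=` [set x]].
  have [Kx|nKx] := pselect (K x); last by exists set0.
  have [/set_mem Ax [V]] := Kiso x Kx; rewrite nbhsE => -[U [Uo Ux] UV] VA.
  by exists U => _; split => // y [Uy Ay]; rewrite -VA; split => //; apply: UV.
have [U Uiso] := choice isoU.
rewrite compact_cover in Kcpt.
have [D DK KD] : finite_subset_cover K U K.
  apply: Kcpt => [x /Uiso[]//|x Kx]; exists x => //; by case: (Uiso x Kx).
apply: sub_finite_set (finite_fset D) => y Ky.
have [x Dx Uxy] := KD y Ky; have [_ _ UA] := Uiso x (set_mem (DK x Dx)).
by have -> : y = x by apply: UA; split => //; apply: set_mem; case: (Kiso y Ky).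
Qed.

Section Isolation.
Context {R : realType} {n : nat}.
Local Notation V := 'rV[R]_n.
Context {E : set V}.
Hypotheses (n_gt1 : (1 < n)%N) (NE : forall q, exists y, nearest E q y)
  (noconf : ~ forbidden_configuration E).

Lemma compl_adherent_isolated x0 : E x0 -> enorm x0 <= 1/4 -> compl_adherent E x0 ->
  isolated E x0.
Proof.
move=> Ex0 x0n adh.
have [[d0 d0_gt0 Est]|unstable] := pselect (exists2 d0, 0 < d0 & stable_near E x0 d0).
  apply: (isolated_enorm Ex0); exists (d0 / 32); first by rewrite divr_gt0.
  by move=> e Ee ex0; apply: (stable_near_close_eq NE Est e n_gt1).
exfalso; apply/noconf/(forbidden_of_unstable_near Ex0 x0n) => del del0.
have : ~ stable_near E x0 del by move=> Est; apply: unstable; exists del.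
by move=> /existsNP[p /not_implyP[nEp /not_implyP[px0 pst]]]; exists p.
Qed.

Lemma isolated_quarter_ball {q : V} : closed E -> enorm q < 1/4 -> ~ E q ->
  forall x0, E x0 -> enorm x0 <= 1/4 -> isolated E x0.
Proof.
move=> Eclosed q4 nEq x0 Ex0 x0n.
have [adh|/existsNP[del /not_implyP[del0 interior]]] := pselect (compl_adherent E x0).
  exact: compl_adherent_isolated.
have x0_int p : enorm (p - x0) < del -> E p.
  by move=> px0; apply: contrapT => nEp; apply: interior; exists p.
have [s s01 [Eb b_adh b_acc]] := segment_exit Eclosed del0 x0_int nEq.
case: b_acc; apply: compl_adherent_isolated => //.
rewrite lerpE; apply: (le_trans (enorm_convex _ _ _ s01)); case/andP: s01 => s0 s1.
have : (1 - s) * enorm x0 <= (1 - s) * (1/4) by rewrite ler_wpM2l // subr_ge0.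
have : s * enorm q <= s * (1/4) by rewrite ler_wpM2l // ltW.
lra.
Qed.

End Isolation.

Theorem lemma4p1 (R : realType) (n : nat) (E : set 'rV[R]_n) :
  (3 <= n)%N ->
  closed E ->
  E `<=` eball 0 1 ->
  E 0 ->
  eball 0 (1 / 4) `\` E !=set0 ->
  ~ (exists (x0 : 'rV[R]_n) (x y z : nat -> 'rV[R]_n) (a beta : R),
        1 < a /\ 0 < beta /\
        (forall k, eball 0 (1 / 2) (x k) /\ eball 0 (1 / 2) (y k)
                   /\ eball 0 (1 / 2) (z k)) /\
        (forall k, E (x k) /\ E (y k) /\ ~ E (z k)) /\
        x @ \oo --> x0 /\ y @ \oo --> x0 /\ z @ \oo --> x0 /\
        (forall k, euclid_dist (x k) (y k) / a < euclid_dist (x k) (z k) /\ euclid_dist (x k) (z k) < a * euclid_dist (x k) (y k) /\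
           euclid_dist (x k) (y k) / a < euclid_dist (y k) (z k) /\ euclid_dist (y k) (z k) < a * euclid_dist (x k) (y k)) /\
        (forall k,
           Vcone (x k) (z k) (beta * euclid_dist (x k) (y k)) `<=` eball 0 1 `\` E /\
           Vcone (y k) (z k) (beta * euclid_dist (x k) (y k)) `<=` eball 0 1 `\` E)) ->
  finite_set (E `&` eball 0 (1 / 4)).
Proof.
move=> n_ge3 Eclosed E_ball E0 [q [q_ball nEq]] noconf.
have n_gt1 : (1 < n)%N by apply: leq_trans n_ge3.
have Ecpt := compact_in_unit_ball Eclosed E_ball.
have NE q' : exists y, nearest E q' y by apply: exists_nearest => //; exists 0.
have q4 : enorm q < 1/4 by move: q_ball; rewrite /eball /euclid_dist /= subr0.
have isol := isolated_quarter_ball n_gt1 NE noconf Eclosed q4 nEq.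
apply: (@sub_finite_set _ _ (E `&` [set w | enorm w <= 1/4])).
  by move=> w [Ew]; rewrite /eball /euclid_dist /= subr0 => /ltW.
apply: (@compact_isolated_finite _ E); first exact: compact_closedI (closed_enorm_le _).
by move=> w [Ew wn]; apply: isol.
Qed.
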